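(* Let $\mathcal{G}=(V,E)$ be a graph with $|V|=n$ and let $\mathcal{P}$ be a local destination-based failover protocol on $\mathcal{G}$. Then one can construct a local destination-based failover protocol $\mathcal{P}_K$ on the complete graph $K_n$ with node set $V$ such that, for all-to-one routing towards any destination $d\in V$ and any set $\mathcal{F}^{(K)}$ of failed edges of $K_n$, the distribution of the loads of the nodes under $\mathcal{P}_K$ in $K_n$ with failures $\mathcal{F}^{(K)}$ is the same as under $\mathcal{P}$ in $\mathcal{G}$ with failures $\mathcal{F}=E\cap\mathcal{F}^{(K)}$ (indeed, every packet follows the same path with the same probability in both settings).
   Context: Local destination-based failover routing: $\Gamma(v)$ denotes the neighbors of $v$ in the graph; given failed edges $\mathcal{F}$, $\mathcal{F}_v=\{w~|~(v,w)\in\mathcal{F}\}$. A local destination-based failover protocol is a family of distributions $\mathcal{D}(v,\mathcal{F}_v,d)$ over $(\Gamma(v)\setminus\mathcal{F}_v)\cup\{v\}$ for all $v,d\in V$ and $\mathcal{F}_v\subseteq\Gamma(v)$. Given the failure set, each node $v$ independently draws its routing entry $\alpha(v,\mathcal{F}_v,d)$ from $\mathcal{D}(v,\mathcal{F}_v,d)$ and forwards packets with destination $d$ there. All-to-one routing towards $d$: every node $v\neq d$ sends one flow to $d$ along the entries. The load of a node is the number of flows passing through it (including its own); nodes on a forwarding cycle traversed by a flow have infinite load. *)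

From HB Require Import structures.
From mathcomp Require Import all_boot all_order all_algebra.
Set Implicit Arguments. Unset Strict Implicit. Unset Printing Implicit Defensive.
Import Order.TTheory GRing.Theory Num.Theory.
Local Open Scope ring_scope.

Section Routing.
Variable V : finType.

Definition nbhd (e : rel V) (v : V) : {set V} := [set w | e v w].

Definition complete : rel V := fun x y => x != y.

(* A set of failed (undirected) edges, stored as a symmetric set of ordered
   pairs, each of which is an edge of the graph. *)
Definition failure_set (e : rel V) (F : {set V * V}) : Prop :=
  forall v w, (v, w) \in F -> e v w && ((w, v) \in F).

Definition Fv (F : {set V * V}) (v : V) : {set V} := [set w | (v, w) \in F].

Variable R : realFieldType.

Definition is_dist (A : {set V}) (p : {ffun V -> R}) : Prop :=
  [/\ forall x, 0 <= p x, \sum_x p x = 1 & forall x, x \notin A -> p x = 0].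

(* A protocol: D(v, F_v, d) as a distribution over V. *)
Definition protocol := V -> {set V} -> V -> {ffun V -> R}.

Definition valid_protocol (e : rel V) (P : protocol) : Prop :=
  forall v d (Fv0 : {set V}), Fv0 \subset nbhd e v ->
    is_dist ((nbhd e v :\: Fv0) :|: [set v]) (P v Fv0 d).

Definition step (alpha : {ffun V -> V}) (d : V) : rel V :=
  [rel a b | (a != d) && (alpha a == b)].

(* The flow started at u passes through x (u itself included). *)
Definition passes alpha d (u x : V) : bool := connect (step alpha d) u x.

(* x lies on a forwarding cycle (self-loops included). *)
Definition on_cycle alpha d (x : V) : bool :=
  (x != d) && connect (step alpha d) (alpha x) x.

(* Load of node x in all-to-one routing towards d: None = infinite. *)
Definition load alpha d (x : V) : option nat :=
  if [exists u, [&& u != d, passes alpha d u x & on_cycle alpha d x]]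
  then None
  else Some #|[set u | (u != d) && passes alpha d u x]|.

Definition load_vec alpha d : {ffun V -> option nat} := [ffun x => load alpha d x].

(* Probability of a routing table: entries drawn independently. *)
Definition table_prob (P : protocol) (F : {set V * V}) (d : V)
  (alpha : {ffun V -> V}) : R :=
  \prod_v P v (Fv F v) d (alpha v).

Definition load_dist (P : protocol) (F : {set V * V}) (d : V)
  (L : {ffun V -> option nat}) : R :=
  \sum_(alpha : {ffun V -> V} | load_vec alpha d == L) table_prob P F d alpha.

End Routing.

From HB Require Import structures.
From mathcomp Require Import all_boot all_order all_algebra.
Set Implicit Arguments. Unset Strict Implicit. Unset Printing Implicit Defensive.
Import Order.TTheory GRing.Theory Num.Theory.
Local Open Scope ring_scope.

(* Simulate G inside K_n: node v ignores the failed links of K_n that are not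
   edges of G and runs P on the rest.  The failures a node sees are then
   exactly its failures in G under E ∩ F^(K), so every node draws its routing
   entry from the same distribution in both settings, and the whole routing
   table, hence the load vector, has the same law. *)

Section RestrictProtocol.
Variables (V : finType) (R : realFieldType).

Lemma is_dist_subset (A B : {set V}) (p : {ffun V -> R}) :
  A \subset B -> is_dist A p -> is_dist B p.
Proof.
move=> /subsetP AB [p_ge0 p_sum1 p_out]; split=> // x xB.
by apply: p_out; apply: contra xB; apply: AB.
Qed.

Variable e : rel V.

Definition restrict_protocol (P : protocol V R) : protocol V R :=
  fun v F d => P v (F :&: nbhd e v) d.

Lemma restrict_support_subset (v : V) (F : {set V}) :
  (nbhd e v :\: (F :&: nbhd e v)) :|: [set v]
    \subset (nbhd (@complete V) v :\: F) :|: [set v].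
Proof.
apply/subsetP => w; rewrite /nbhd /complete !inE eq_sym.
by case: (w \in F); case: (e v w); case: (v == w).
Qed.

Lemma valid_restrict_protocol (P : protocol V R) :
  valid_protocol e P -> valid_protocol (@complete V) (restrict_protocol P).
Proof.
move=> HP v d F _; apply: is_dist_subset (restrict_support_subset v F) _.
exact: HP (subsetIr _ _).
Qed.

Lemma Fv_restrict (F : {set V * V}) (v : V) :
  Fv [set p in F | e p.1 p.2] v = Fv F v :&: nbhd e v.
Proof. by apply/setP => w; rewrite /Fv /nbhd !inE. Qed.

Lemma table_prob_restrict (P : protocol V R) (F : {set V * V}) (d : V)
    (alpha : {ffun V -> V}) :
  table_prob (restrict_protocol P) F d alpha
    = table_prob P [set p in F | e p.1 p.2] d alpha.
Proof. by apply: eq_bigr => v _; rewrite Fv_restrict. Qed.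

Lemma load_dist_restrict (P : protocol V R) (F : {set V * V}) (d : V)
    (L : {ffun V -> option nat}) :
  load_dist (restrict_protocol P) F d L = load_dist P [set p in F | e p.1 p.2] d L.
Proof. by apply: eq_bigr => alpha _; apply: table_prob_restrict. Qed.

End RestrictProtocol.

Theorem mainTheorem6 (R : realFieldType) (V : finType) (e : rel V)
  (e_sym : symmetric e) (e_irr : irreflexive e)
  (P : protocol V R) (HP : valid_protocol e P) :
  exists PK : protocol V R,
    valid_protocol (@complete V) PK /\
    forall (d : V) (FK : {set V * V}), failure_set (@complete V) FK ->
      forall L : {ffun V -> option nat},
        load_dist PK FK d L = load_dist P [set p in FK | e p.1 p.2] d L.
Proof.
exists (restrict_protocol e P); split; first exact: valid_restrict_protocol.
by move=> d FK _ L; apply: load_dist_restrict.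
Qed.
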